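(* Let $S=s_1,\ldots,s_n$ be a sequence of positive real numbers, $\gamma>0$, $k$ a positive integer. Let $(L,\alpha,\beta)$ be an optimal solution of $\textsc{Exp}$ for $S,\gamma,k$. Let $g=(\prod_{i=1}^ns_i)^{1/n}$ and $\psi=n\log g$. Let $\epsilon_1,\epsilon_2>0$ and let $\alpha',\beta'$ satisfy $\beta\le\beta'\le\beta(1+\epsilon_1)$ and $\alpha\le\alpha'\le\alpha(1+\epsilon_2)$. Then \[ \mathrm{score}_{\exp}(L,S;\alpha',\beta',\gamma)-\psi\le c\,\big(\mathrm{score}_{\exp}(L,S;\alpha,\beta,\gamma)-\psi\big),\qquad c=(1+\epsilon_1)(1+\epsilon_2)^k. \]
   Context: A level sequence is $L=\ell_1,\ldots,\ell_n$ of integers with $0\le\ell_i\le k$; set $\ell_0=0$. The penalty is $\mathrm{pen}(x,y)=\max(y-x,0)\,\gamma\log n$; $p_{\exp}(s;\lambda)=\lambda e^{-\lambda s}$; $\mathrm{score}_{\exp}(L,S;\alpha,\beta,\gamma)=\sum_{i=1}^n\big[-\log p_{\exp}(s_i;\beta\alpha^{\ell_i})+\mathrm{pen}(\ell_{i-1},\ell_i)\big]$. Problem $\textsc{Exp}$: given $S,\gamma,k$, find $L$ and parameters $\alpha>1$, $\beta>0$ minimizing this score. The paper assumes $s_i>0$ for this problem. *)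

From Stdlib Require Import Reals List Lra.
Import ListNotations.
Open Scope R_scope.

Definition p_exp (s lam : R) : R := lam * exp (- lam * s).

Definition pen (gamma : R) (n : nat) (x y : nat) : R :=
  Rmax (INR y - INR x) 0 * gamma * ln (INR n).

(* sum over i of [ -log p_exp(s_i; beta alpha^{l_i}) + pen(l_{i-1}, l_i) ],
   with prev = l_{i-1} (l_0 = 0). *)
Fixpoint score_aux (alpha beta gamma : R) (n : nat) (prev : nat)
    (L : list nat) (S : list R) : R :=
  match L, S with
  | l :: L', s :: S' =>
      (- ln (p_exp s (beta * alpha ^ l)) + pen gamma n prev l)
      + score_aux alpha beta gamma n l L' S'
  | _, _ => 0
  end.

Definition score_exp (L : list nat) (S : list R) (alpha beta gamma : R) : R :=
  score_aux alpha beta gamma (length S) 0 L S.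

Definition valid_levels (k : nat) (S : list R) (L : list nat) : Prop :=
  length L = length S /\ Forall (fun l => (l <= k)%nat) L.

Definition optimal_exp (S : list R) (gamma : R) (k : nat)
    (L : list nat) (alpha beta : R) : Prop :=
  valid_levels k S L /\ 1 < alpha /\ 0 < beta /\
  forall (L' : list nat) (alpha' beta' : R),
    valid_levels k S L' -> 1 < alpha' -> 0 < beta' ->
    score_exp L S alpha beta gamma <= score_exp L' S alpha' beta' gamma.

Definition prod_list (S : list R) : R := fold_right Rmult 1 S.

Definition geo_mean (S : list R) : R :=
  Rpower (prod_list S) (1 / INR (length S)).

Definition psi_of (S : list R) : R := INR (length S) * ln (geo_mean S).

(* Subtracting psi = sum_i ln s_i from the score leaves the penalties P plus
   sum_i (x_i - ln x_i), where x_i = beta alpha^l_i s_i.  Enlarging alpha and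
   beta multiplies X = sum_i x_i by at most c and can only increase
   Y = sum_i ln x_i, so it suffices that P - Y >= 0.  Rescaling beta by t
   changes the score by (t - 1) X - n ln t; optimality of beta therefore
   forces X <= n, whence Y <= X - n <= 0 by ln x <= x - 1. *)

From Stdlib Require Import Reals List Lra Lia.
Open Scope R_scope.

Lemma ln_le_sub_one x : 0 < x -> ln x <= x - 1.
Proof.
  intros x_pos.
  pose proof (exp_ineq1_le (ln x)) as exp_ge.
  rewrite exp_ln in exp_ge; lra.
Qed.

Lemma ln_le x y : 0 < x -> x <= y -> ln x <= ln y.
Proof.
  intros x_pos [lt_xy | <-]; [left; apply ln_increasing |]; lra.
Qed.

Lemma le_of_forall_mul_lt1 x y :
  0 <= y -> (forall t, 0 < t < 1 -> x * t <= y) -> x <= y.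
Proof.
  intros y_ge0 bound.
  destruct (Rle_or_lt x y) as [le_xy | lt_yx]; [exact le_xy | exfalso].
  pose (t := (x + y) / (2 * x)).
  assert (t_x : x * t = (x + y) / 2) by (unfold t; field; lra).
  assert (t_lt1 : t < 1).
  { apply (Rmult_lt_reg_l x); [lra |]. rewrite t_x; lra. }
  assert (t_pos : 0 < t) by (unfold t; apply Rdiv_lt_0_compat; lra).
  pose proof (bound t (conj t_pos t_lt1)); lra.
Qed.

Fixpoint zip_sum (f : nat -> R -> R) (L : list nat) (S : list R) : R :=
  match L, S with
  | l :: L', s :: S' => f l s + zip_sum f L' S'
  | _, _ => 0
  end.

Section ZipSum.

Variables (L : list nat) (S : list R).

Lemma zip_sum_ext f g :
  (forall l s, In s S -> f l s = g l s) -> zip_sum f L S = zip_sum g L S.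
Proof.
  revert S; induction L as [| l L' IH]; intros [| s S'] fg; simpl; auto.
  rewrite (fg l s), IH; simpl; auto.
  intros l0 s0 s0_in; apply fg; simpl; auto.
Qed.

Lemma zip_sum_le f g :
  (forall l s, In l L -> In s S -> f l s <= g l s) ->
  zip_sum f L S <= zip_sum g L S.
Proof.
  revert S; induction L as [| l L' IH]; intros [| s S'] fg; simpl; try lra.
  apply Rplus_le_compat; [apply fg; simpl; auto | apply IH].
  intros l0 s0 l0_in s0_in; apply fg; simpl; auto.
Qed.

Lemma zip_sum_add f g :
  zip_sum (fun l s => f l s + g l s) L S = zip_sum f L S + zip_sum g L S.
Proof.
  revert S; induction L as [| l L' IH]; intros [| s S']; simpl; try lra.
  rewrite IH; ring.
Qed.

Lemma zip_sum_sub f g :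
  zip_sum (fun l s => f l s - g l s) L S = zip_sum f L S - zip_sum g L S.
Proof.
  revert S; induction L as [| l L' IH]; intros [| s S']; simpl; try lra.
  rewrite IH; ring.
Qed.

Lemma zip_sum_scal c f :
  zip_sum (fun l s => c * f l s) L S = c * zip_sum f L S.
Proof.
  revert S; induction L as [| l L' IH]; intros [| s S']; simpl; try lra.
  rewrite IH; ring.
Qed.

Lemma zip_sum_const c :
  length L = length S -> zip_sum (fun _ _ => c) L S = INR (length S) * c.
Proof.
  revert S; induction L as [| l L' IH]; intros [| s S'] len;
    cbn [zip_sum length] in *; try discriminate.
  - simpl; ring.
  - rewrite IH, S_INR by lia; ring.
Qed.

Lemma zip_sum_ln_snd :
  length L = length S -> Forall (fun s => 0 < s) S ->
  zip_sum (fun _ s => ln s) L S = ln (prod_list S).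
Proof.
  revert S; induction L as [| l L' IH]; intros [| s S'] len S_pos; simpl in *;
    try discriminate.
  - now rewrite ln_1.
  - inversion S_pos as [| ? ? s_pos S'_pos]; subst.
    assert (prod_pos : 0 < prod_list S').
    { clear - S'_pos. induction S'_pos; simpl; [lra |].
      now apply Rmult_lt_0_compat. }
    rewrite ln_mult, IH by (auto; lia); reflexivity.
Qed.

End ZipSum.

Lemma psi_of_eq S : psi_of S = ln (prod_list S).
Proof.
  unfold psi_of, geo_mean. rewrite ln_Rpower.
  destruct S as [| s S']; simpl length.
  - simpl. rewrite ln_1; ring.
  - field. apply not_0_INR; lia.
Qed.

Fixpoint penalty_sum (gamma : R) (n prev : nat) (L : list nat) (S : list R) : R :=
  match L, S with
  | l :: L', s :: S' => pen gamma n prev l + penalty_sum gamma n l L' S'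
  | _, _ => 0
  end.

Lemma pen_nonneg gamma n x y : 0 <= gamma -> 0 <= pen gamma n x y.
Proof.
  intros gamma_ge0. unfold pen.
  assert (ln_n_ge0 : 0 <= ln (INR n)).
  { destruct n as [| n'].
    - (* [ln] is 0 on nonpositive arguments *)
      simpl; unfold ln; case Rlt_dec; intros lt00; [exfalso |]; lra.
    - rewrite <- ln_1. apply ln_le; [lra |].
      rewrite S_INR. pose proof (pos_INR n'); lra. }
  repeat apply Rmult_le_pos; auto. apply Rmax_r.
Qed.

Lemma penalty_sum_nonneg gamma n prev L S :
  0 <= gamma -> 0 <= penalty_sum gamma n prev L S.
Proof.
  intros gamma_ge0. revert prev S.
  induction L as [| l L' IH]; intros prev [| s S']; simpl; try lra.
  apply Rplus_le_le_0_compat; [apply pen_nonneg | apply IH]; auto.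
Qed.

Lemma score_aux_split a b gamma n prev L S :
  score_aux a b gamma n prev L S =
  penalty_sum gamma n prev L S + zip_sum (fun l s => - ln (p_exp s (b * a ^ l))) L S.
Proof.
  revert prev S.
  induction L as [| l L' IH]; intros prev [| s S']; simpl; try lra.
  rewrite IH; ring.
Qed.

Lemma neg_ln_p_exp s lam :
  0 < s -> 0 < lam -> - ln (p_exp s lam) = lam * s - ln (lam * s) + ln s.
Proof.
  intros s_pos lam_pos. unfold p_exp.
  rewrite ln_mult, ln_exp, ln_mult by (auto using exp_pos); ring.
Qed.

Definition rate_sum (a b : R) : list nat -> list R -> R :=
  zip_sum (fun l s => b * a ^ l * s).

Definition log_rate_sum (a b : R) : list nat -> list R -> R :=
  zip_sum (fun l s => ln (b * a ^ l * s)).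

Lemma rate_pos a b l s : 0 < a -> 0 < b -> 0 < s -> 0 < b * a ^ l * s.
Proof.
  intros a_pos b_pos s_pos.
  repeat apply Rmult_lt_0_compat; auto using pow_lt.
Qed.

Section Scores.

Variables (L : list nat) (S : list R).
Hypotheses (len_LS : length L = length S) (S_pos : Forall (fun s => 0 < s) S).

Lemma In_S_pos s : In s S -> 0 < s.
Proof. now rewrite Forall_forall in S_pos; apply S_pos. Qed.

Lemma score_exp_sub_psi a b gamma :
  0 < a -> 0 < b ->
  score_exp L S a b gamma - psi_of S =
  penalty_sum gamma (length S) 0 L S + rate_sum a b L S - log_rate_sum a b L S.
Proof.
  intros a_pos b_pos.
  unfold score_exp, rate_sum, log_rate_sum.
  rewrite score_aux_split, psi_of_eq, <- zip_sum_ln_snd with (L := L) by auto.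
  rewrite (zip_sum_ext L S _
             (fun l s => (b * a ^ l * s - ln (b * a ^ l * s)) + ln s)).
  - rewrite zip_sum_add, zip_sum_sub; ring.
  - intros l s s_in. rewrite neg_ln_p_exp, Rmult_assoc;
      auto using In_S_pos, Rmult_lt_0_compat, pow_lt.
Qed.

Lemma rate_sum_scale a b t : rate_sum a (b * t) L S = t * rate_sum a b L S.
Proof.
  unfold rate_sum. rewrite <- zip_sum_scal.
  apply zip_sum_ext; intros; ring.
Qed.

Lemma log_rate_sum_scale a b t :
  0 < a -> 0 < b -> 0 < t ->
  log_rate_sum a (b * t) L S = log_rate_sum a b L S + INR (length S) * ln t.
Proof.
  intros a_pos b_pos t_pos. unfold log_rate_sum.
  rewrite <- (zip_sum_const L S) by exact len_LS.
  rewrite <- zip_sum_add.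
  apply zip_sum_ext; intros l s s_in.
  replace (b * t * a ^ l * s) with (b * a ^ l * s * t) by ring.
  rewrite ln_mult; auto using rate_pos, In_S_pos.
Qed.

Lemma log_rate_sum_le_rate_sum a b :
  0 < a -> 0 < b -> log_rate_sum a b L S <= rate_sum a b L S - INR (length S).
Proof.
  intros a_pos b_pos. unfold log_rate_sum, rate_sum.
  rewrite <- (Rmult_1_r (INR _)), <- (zip_sum_const L S) by exact len_LS.
  rewrite <- zip_sum_sub.
  apply zip_sum_le; intros l s _ s_in.
  apply ln_le_sub_one, rate_pos; auto using In_S_pos.
Qed.

Lemma log_rate_sum_monotone a b a' b' :
  0 < a -> 0 < b -> a <= a' -> b <= b' ->
  log_rate_sum a b L S <= log_rate_sum a' b' L S.
Proof.
  intros a_pos b_pos le_a le_b. unfold log_rate_sum.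
  apply zip_sum_le; intros l s _ s_in.
  pose proof (In_S_pos s s_in).
  apply ln_le; [apply rate_pos; auto |].
  apply Rmult_le_compat_r; [lra |].
  apply Rmult_le_compat; try lra; [apply pow_le; lra | apply pow_incr; lra].
Qed.

Lemma rate_sum_perturb_le k a b a' b' e1 e2 :
  Forall (fun l => (l <= k)%nat) L -> 0 < a -> 0 <= e2 ->
  0 <= b' <= b * (1 + e1) -> a <= a' <= a * (1 + e2) ->
  rate_sum a' b' L S <= (1 + e1) * (1 + e2) ^ k * rate_sum a b L S.
Proof.
  intros L_le a_pos e2_ge0 b'_bounds [le_a le_a'].
  unfold rate_sum. rewrite <- zip_sum_scal.
  apply zip_sum_le; intros l s l_in s_in.
  rewrite Forall_forall in L_le. specialize (L_le l l_in).
  pose proof (In_S_pos s s_in).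
  assert (pow_a' : a' ^ l <= a ^ l * (1 + e2) ^ k).
  { apply Rle_trans with ((a * (1 + e2)) ^ l); [apply pow_incr; lra |].
    rewrite Rpow_mult_distr. apply Rmult_le_compat_l; [apply pow_le; lra |].
    apply Rle_pow; [lra | exact L_le]. }
  replace ((1 + e1) * (1 + e2) ^ k * (b * a ^ l * s))
    with (b * (1 + e1) * (a ^ l * (1 + e2) ^ k) * s) by ring.
  apply Rmult_le_compat_r; [lra |].
  apply Rmult_le_compat; try lra; apply pow_le; lra.
Qed.

End Scores.

Lemma optimal_rate_sum_le S gamma k L alpha beta :
  Forall (fun s => 0 < s) S -> optimal_exp S gamma k L alpha beta ->
  rate_sum alpha beta L S <= INR (length S).
Proof.
  intros S_pos [[len_LS L_le] [alpha_gt1 [beta_pos optimal]]].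
  apply le_of_forall_mul_lt1; [apply pos_INR |].
  intros t [t_pos t_lt1].
  assert (opt_t : score_exp L S alpha beta gamma - psi_of S
                  <= score_exp L S alpha (beta * t) gamma - psi_of S).
  { pose proof (optimal L alpha (beta * t) (conj len_LS L_le) alpha_gt1
                  ltac:(nra)); lra. }
  rewrite !score_exp_sub_psi, rate_sum_scale, log_rate_sum_scale in opt_t
    by (auto; nra).
  pose proof (ln_le_sub_one (/ t) ltac:(auto with real)) as ln_inv_t.
  rewrite ln_Rinv in ln_inv_t by exact t_pos.
  set (X := rate_sum alpha beta L S) in *.
  assert (sum_le : (1 - t) * X <= INR (length S) * ((1 - t) / t)).
  { replace ((1 - t) / t) with (/ t - 1) by (field; lra).
    pose proof (pos_INR (length S)). nra. }
  apply (Rmult_le_reg_l ((1 - t) / t)); [apply Rdiv_lt_0_compat; lra |].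
  replace ((1 - t) / t * (X * t)) with ((1 - t) * X) by (field; lra).
  lra.
Qed.

Theorem lemma10 (S : list R) (gamma : R) (k : nat) (L : list nat)
    (alpha beta : R)
    (hS : Forall (fun s => 0 < s) S) (hgamma : 0 < gamma) (hk : (1 <= k)%nat)
    (hopt : optimal_exp S gamma k L alpha beta)
    (eps1 eps2 alpha' beta' : R) (he1 : 0 < eps1) (he2 : 0 < eps2)
    (hb : beta <= beta' <= beta * (1 + eps1))
    (ha : alpha <= alpha' <= alpha * (1 + eps2)) :
  score_exp L S alpha' beta' gamma - psi_of S
    <= (1 + eps1) * (1 + eps2) ^ k * (score_exp L S alpha beta gamma - psi_of S).
Proof.
  pose proof (optimal_rate_sum_le S gamma k L alpha beta hS hopt) as rate_le_n.
  destruct hopt as [[len_LS L_le] [alpha_gt1 [beta_pos _]]].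
  rewrite !score_exp_sub_psi by (auto; lra).
  pose proof (penalty_sum_nonneg gamma (length S) 0 L S ltac:(lra)) as P_ge0.
  pose proof (rate_sum_perturb_le L S hS k alpha beta alpha' beta' eps1 eps2
                L_le ltac:(lra) ltac:(lra) ltac:(lra) ha) as rate_le.
  pose proof (log_rate_sum_monotone L S hS alpha beta alpha' beta'
                ltac:(lra) beta_pos ltac:(lra) ltac:(lra)) as log_le.
  pose proof (log_rate_sum_le_rate_sum L S len_LS hS alpha beta
                ltac:(lra) beta_pos) as log_le_rate.
  assert (c_ge1 : 1 <= (1 + eps1) * (1 + eps2) ^ k).
  { pose proof (pow_R1_Rle (1 + eps2) k ltac:(lra)). nra. }
  set (c := (1 + eps1) * (1 + eps2) ^ k) in *.
  set (P := penalty_sum gamma (length S) 0 L S) in *.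
  set (Y := log_rate_sum alpha beta L S) in *.
  assert (gap : 0 <= (c - 1) * (P - Y)) by (apply Rmult_le_pos; lra).
  nra.
Qed.
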